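(* Let $S$ be a MANS-semigroup with $\mathrm{msg}(S)=\{n_1<n_2<\cdots<n_e<n_{e+1}\}$, where $e\geq 2$. Then for every $i\in\{2,\ldots,e\}$, $S'=\langle n_1,n_2,\ldots,n_i\rangle$ is a MANS-semigroup with $\mathrm{e}(S')=i$.
   Context: $\mathbb{N}=\{0,1,2,\ldots\}$. A numerical semigroup is a subset $S\subseteq\mathbb{N}$ closed under addition, containing $0$, with $\mathbb{N}\setminus S$ finite; $\langle A\rangle$ is the submonoid generated by $A$; $\mathrm{msg}(S)$ is the unique finite minimal system of generators and $\mathrm{e}(S)=|\mathrm{msg}(S)|$. $S$ is a MANS-semigroup if $w(1)<\cdots<w(\mathrm{m}(S)-1)$, where $\mathrm{m}(S)$ is the least element of $S\setminus\{0\}$ and $w(i)$ the least element of $S$ congruent to $i$ modulo $\mathrm{m}(S)$. *)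

From mathcomp Require Import all_boot.
Set Implicit Arguments. Unset Strict Implicit. Unset Printing Implicit Defensive.

Inductive gen (A : seq nat) : nat -> Prop :=
| gen0 : gen A 0
| genS : forall a x, a \in A -> gen A x -> gen A (a + x).

Definition numerical_semigroup (S : nat -> Prop) : Prop :=
  [/\ S 0, (forall x y, S x -> S y -> S (x + y))
    & exists N, forall n, N <= n -> S n].

Definition is_msg (S : nat -> Prop) (A : seq nat) : Prop :=
  [/\ uniq A, (forall x, S x <-> gen A x)
    & forall B : seq nat, {subset B <= A} -> (forall x, S x <-> gen B x) ->
        {subset A <= B}].

Definition embedding_dimension (S : nat -> Prop) (k : nat) : Prop :=
  exists A, is_msg S A /\ size A = k.

Definition is_multiplicity (S : nat -> Prop) (m : nat) : Prop :=
  [/\ 0 < m, S m & forall x, 0 < x -> S x -> m <= x].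

Definition is_apery_elt (S : nat -> Prop) (m i w : nat) : Prop :=
  [/\ S w, w = i %[mod m] & forall x, S x -> x = i %[mod m] -> w <= x].

Definition MANS (S : nat -> Prop) : Prop :=
  numerical_semigroup S /\
  exists m, is_multiplicity S m /\
    forall i j wi wj, 1 <= i -> i < j -> j <= m - 1 ->
      is_apery_elt S m i wi -> is_apery_elt S m j wj -> wi < wj.

From mathcomp Require Import all_boot zify.
From Stdlib Require Import Classical Wf_nat.

(* Let m be the multiplicity and A the first i generators. The multiplicity is a
   generator and no other generator is a multiple of it, so some a in A has
   a mod m > 0; and since the generators are sorted, every element of S below a
   member of A already lies in <A>. For a generator a of residue r > 0 the MANS
   condition gives w(r-1) < w(r) <= a, so w(r-1) is in <A>: trading a for w(r-1)
   lowers the residue of an element of <A> by one while decreasing it. Hence <A>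
   contains an element of residue 1, which makes it cofinite, and any element of
   <A> of residue j dominates one of each residue 0 < i < j, which is the MANS
   property of <A>. Minimality of A follows from minimality of the full system. *)

Set Implicit Arguments.
Unset Strict Implicit.
Unset Printing Implicit Defensive.

Lemma ndvdn_gt0 d n : ~~ (d %| n) -> 0 < n.
Proof. by case: n => // /negP[]; apply: dvdn0. Qed.

Lemma gen_add A x y : gen A x -> gen A y -> gen A (x + y).
Proof. by elim=> [|a x' Ha _ IH] // Hy; rewrite -addnA; apply: genS Ha (IH Hy). Qed.

Lemma gen_mem A a : a \in A -> gen A a.
Proof. by move=> Ha; rewrite -[a]addn0; apply: genS Ha (gen0 A). Qed.

Lemma gen_muln A k x : gen A x -> gen A (k * x).
Proof. by move=> Hx; elim: k => [|k IH]; [apply: gen0 | rewrite mulSn; apply: gen_add]. Qed.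

Lemma gen_trans A B x : (forall a, a \in A -> gen B a) -> gen A x -> gen B x.
Proof. by move=> HAB; elim=> [|a x' Ha _]; [apply: gen0 | apply/gen_add/HAB]. Qed.

Lemma gen_subset A B x : {subset A <= B} -> gen A x -> gen B x.
Proof. by move=> HAB; apply: gen_trans => a /HAB /gen_mem. Qed.

Lemma gen_split (p : pred nat) A x :
    p 0 -> (forall u v, p u -> p v -> p (u + v)) -> gen A x -> ~~ p x ->
  exists a y, [/\ a \in A, ~~ p a, gen A y & x = a + y].
Proof.
move=> p0 pD; elim=> [|a y Ha Hy IH]; first by rewrite p0.
case pa: (p a) => Hay; last by exists a, y; rewrite pa.
have [|b [z [Hb pb Hz ->]]] := IH; first by apply: contra Hay; apply: pD.
by exists b, (a + z); split=> //; [apply: genS | rewrite addnCA].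
Qed.

Lemma ex_least (P : nat -> Prop) :
  (exists n, P n) -> exists n, P n /\ forall k, P k -> n <= k.
Proof.
move=> HP; have [n [[Pn Hn] _]] :=
  dec_inh_nat_subset_has_unique_least_element P (fun n => classic (P n)) HP.
by exists n; split=> // k /Hn /leP.
Qed.

Lemma apery_exists S m t :
  numerical_semigroup S -> 0 < m -> exists w, is_apery_elt S m t w.
Proof.
move=> [_ _ [N HN]] m_gt0.
have [|w [[Sw Hwt] Hw]] := @ex_least (fun w => S w /\ w = t %[mod m]).
  by exists (N * m + t); split; [apply: HN; nia | rewrite modnMDl].
by exists w; split=> // x Sx Hxt; apply: Hw.
Qed.

Lemma multiplicity_sub (S T : nat -> Prop) m :
  is_multiplicity S m -> (forall x, T x -> S x) -> T m -> is_multiplicity T m.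
Proof. by move=> [m_gt0 _ Hm] HTS Tm; split=> // x x_gt0 /HTS; apply: Hm. Qed.

Lemma gen_numerical A m x :
  0 < m -> gen A m -> gen A x -> x %% m = 1 -> numerical_semigroup (gen A).
Proof.
move=> m_gt0 HmA HxA Hx1; split; [exact: gen0 | exact: gen_add |].
(* With n = q m + r and r < m, n - r x is a multiple of m, nonnegative as n >= m x. *)
exists (m * x) => n Hn.
have Hx : x = x %/ m * m + 1 by rewrite {1}(divn_eq x m) Hx1.
have Hn' := divn_eq n m; have Hr := ltn_pmod n m_gt0.
move: (n %/ m) (n %% m) (x %/ m) Hn' Hr Hx => q r q1 Hn' Hr Hx.
have Hq : r * q1 <= q.
  by rewrite -(leq_pmul2r m_gt0); nia.
have -> : n = (q - r * q1) * m + r * x by rewrite Hn' mulnBl Hx; nia.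
by apply: gen_add; apply: gen_muln.
Qed.

Section MinimalSystem.

Variables (S : nat -> Prop) (s : seq nat).
Hypothesis Hmsg : is_msg S s.

Lemma msg_gen_rem b : b \in s -> ~ gen [seq c <- s | c != b] b.
Proof.
have [_ HSs Hmin] := Hmsg => Hb Hrem.
have Hsub : {subset [seq c <- s | c != b] <= s} by move=> c; rewrite mem_filter => /andP[].
suff /(_ b Hb) : {subset s <= [seq c <- s | c != b]} by rewrite mem_filter eqxx.
apply: Hmin => // x; rewrite HSs; split; last exact: gen_subset.
apply: gen_trans => c Hc; have [->//|Hcb] := eqVneq c b.
by apply: gen_mem; rewrite mem_filter Hcb.
Qed.

Lemma msg_multiplicity m : is_multiplicity S m -> m \in s.
Proof.
have [_ HSs _] := Hmsg => -[m_gt0 Sm Hm].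
have pD u v : u == 0 -> v == 0 -> u + v == 0 by move=> /eqP-> /eqP->.
have [|b [y [Hb b_neq0 _ Hmby]]] :=
  @gen_split (pred1 0) s m (eqxx 0) pD (proj1 (HSs m) Sm); first by rewrite /= -lt0n.
have Hmb : m <= b by apply: Hm; [rewrite lt0n | apply/HSs/gen_mem].
by have -> : m = b by lia.
Qed.

Lemma msg_dvdn_multiplicity m b :
  is_multiplicity S m -> b \in s -> m %| b -> b = m.
Proof.
move=> Hmult Hb /dvdnP[k Hbk]; apply/eqP/negPn/negP => Hbm.
case: (msg_gen_rem Hb); rewrite {2}Hbk; apply/gen_muln/gen_mem.
by rewrite mem_filter eq_sym Hbm msg_multiplicity.
Qed.

Lemma msg_sub t : uniq t -> {subset t <= s} -> is_msg (gen t) t.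
Proof.
have [Hu HSs Hmin] := Hmsg => Ht Hts; split=> // B HBt HtB.
pose C := B ++ [seq c <- s | c \notin t].
have HCs : {subset C <= s}.
  by move=> c; rewrite mem_cat mem_filter => /orP[/HBt/Hts|/andP[]].
have HSC x : S x <-> gen C x.
  rewrite HSs; split; last exact: gen_subset.
  apply: gen_trans => c Hc; have [Hct|Hct] := boolP (c \in t).
    have /HtB : gen t c by apply: gen_mem.
    by apply: gen_subset => d Hd; rewrite mem_cat Hd.
  by apply: gen_mem; rewrite mem_cat mem_filter Hct Hc orbT.
move=> a Ha; have := Hmin C HCs HSC a (Hts a Ha).
by rewrite mem_cat mem_filter Ha /= orbF.
Qed.

End MinimalSystem.

Lemma gen_take_lt s i a y :
  sorted ltn s -> a \in take i s -> gen s y -> y < a -> gen (take i s) y.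
Proof.
move=> Hs Ha; elim=> [|b x Hb _ IH] Hlt; first exact: gen0.
apply: genS; last by apply: IH; lia.
move: Hb Hs; rewrite -{1 2}(cat_take_drop i s) mem_cat => /orP[//|Hb].
rewrite (sorted_pairwise ltn_trans) pairwise_cat => /and3P[/allrelP/(_ a b Ha Hb) Hab _ _].
lia.
Qed.

Definition apery_increasing (S : nat -> Prop) (m : nat) : Prop :=
  forall i j wi wj, 1 <= i -> i < j -> j <= m - 1 ->
    is_apery_elt S m i wi -> is_apery_elt S m j wj -> wi < wj.

Section Descent.

Variables (S : nat -> Prop) (m : nat) (A : seq nat).
Hypotheses (HS : numerical_semigroup S) (m_gt0 : 0 < m) (Hinc : apery_increasing S m).
Hypothesis HAS : forall a : nat, a \in A -> S a.
Hypothesis HAdown : forall a y : nat, a \in A -> S y -> y < a -> gen A y.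

Lemma gen_below_generator (a : nat) : a \in A -> ~~ (m %| a) ->
  exists2 w, gen A w & w < a /\ w = a.-1 %[mod m].
Proof.
move=> Ha Hma; have m_neq1 : m != 1 by apply: contraNneq Hma => ->.
have a_gt0 := ndvdn_gt0 Hma.
have r_gt0 : 0 < a %% m by rewrite lt0n -/(dvdn m a).
have r_lt : a %% m < m := ltn_pmod a m_gt0.
have [w [Sw Hwr Hw]] := apery_exists (a %% m).-1 HS m_gt0.
have Hwa : w < a.
  have [r1|r_gt1] := eqVneq (a %% m) 1.
    have [S0 _ _] := HS.
    by have := Hw 0 S0; rewrite r1 mod0n; lia.
  have [w' [Sw' Hw'r Hw']] := apery_exists (a %% m) HS m_gt0.
  apply: (@leq_trans w'); last by apply: Hw' (HAS Ha) _; rewrite modn_mod.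
  by apply: (Hinc _ _ _ (And3 Sw Hwr Hw) (And3 Sw' Hw'r Hw')); lia.
exists w; first exact: HAdown Ha Sw Hwa.
by split=> //; rewrite Hwr (modn_pred m_neq1 a_gt0) (negbTE Hma) modn_small //; lia.
Qed.

Lemma gen_descent_step x : gen A x -> ~~ (m %| x) ->
  exists2 z, gen A z & z < x /\ z = x.-1 %[mod m].
Proof.
move=> Hx Hmx.
have [a [y [Ha Hma Hy ->]]] := @gen_split (dvdn m) A x (dvdn0 m) (@dvdn_add m) Hx Hmx.
have [w Hw [Hwa Hwr]] := gen_below_generator Ha Hma.
exists (w + y); first exact: gen_add.
split; first by rewrite ltn_add2r.
have a_gt0 := ndvdn_gt0 Hma.
by rewrite -modnDml Hwr modnDml -subn1 addnBAC // subn1.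
Qed.

Lemma gen_descent x k : gen A x -> k < x %% m ->
  exists2 z, gen A z & z + k <= x /\ z %% m = x %% m - k.
Proof.
move=> Hx; elim: k => [|k IH] Hk; first by exists x; rewrite ?addn0 ?subn0.
have [z Hz [Hzx Hzm]] := IH (ltnW Hk).
have Hmz : ~~ (m %| z) by rewrite /dvdn Hzm; lia.
have [z' Hz' [Hz'z Hz'm]] := gen_descent_step Hz Hmz.
have m_neq1 : m != 1 by apply: contraNneq Hmz => ->.
have z_gt0 := ndvdn_gt0 Hmz.
exists z'; first done.
split; first lia.
by rewrite Hz'm (modn_pred m_neq1 z_gt0) (negbTE Hmz) Hzm; lia.
Qed.

Lemma gen_residue1 (a : nat) : a \in A -> ~~ (m %| a) -> exists2 x, gen A x & x %% m = 1.
Proof.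
move=> Ha Hma; have Hk : (a %% m).-1 < a %% m by rewrite ltn_predL lt0n -/(dvdn m a).
have [z Hz [_ Hzm]] := gen_descent (gen_mem Ha) Hk.
by exists z => //; rewrite Hzm; lia.
Qed.

Lemma gen_apery_increasing : apery_increasing (gen A) m.
Proof.
move=> i j wi wj i_gt0 Hij Hjm [_ _ Hwi] [Hwj Hwjr _].
have Hwjm : wj %% m = j by rewrite Hwjr modn_small //; lia.
have Hk : j - i < wj %% m by rewrite Hwjm; lia.
have [z Hz [Hzwj Hzm]] := gen_descent Hwj Hk.
suff : wi <= z by lia.
by apply: Hwi Hz _; rewrite Hzm Hwjm modn_small; lia.
Qed.

End Descent.

Theorem corollary4p3 (S : nat -> Prop) (e : nat) (s : seq nat) :
  MANS S -> 2 <= e ->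
  is_msg S s -> sorted ltn s -> size s = e.+1 ->
  forall i, 2 <= i <= e ->
    MANS (gen (take i s)) /\ embedding_dimension (gen (take i s)) i.
Proof.
move=> [HS [m [Hmult Hinc]]] _ Hmsg Hs Hsz i /andP[Hi2 Hie].
have [Hu HSs _] := Hmsg; have [m_gt0 Sm Hm] := Hmult.
set A := take i s.
have HAs : {subset A <= s} by move=> a; apply: mem_take.
have HgenS x : gen A x -> S x by move=> /(gen_subset HAs) /HSs.
have HAS a : a \in A -> S a by move=> /gen_mem /HgenS.
have HAdown a y : a \in A -> S y -> y < a -> gen A y.
  by move=> Ha /HSs; apply: gen_take_lt Ha.
have HsizeA : size A = i by rewrite size_takel ?Hsz; lia.
have /hasP[a Ha /= Ham] : has (predC1 m) A.
  apply: contraT; rewrite -all_predC => /allP HAm.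
  have : size A <= size [:: m].
    by apply: uniq_leq_size (take_uniq i Hu) _ => x /HAm /=; rewrite negbK inE.
  by rewrite HsizeA /=; lia.
have Hma : ~~ (m %| a).
  by apply: contra Ham => /(msg_dvdn_multiplicity Hmsg Hmult (HAs a Ha)) ->.
have HmA : gen A m.
  apply: (HAdown a m Ha Sm); rewrite ltn_neqAle eq_sym Ham.
  exact: Hm (ndvdn_gt0 Hma) (HAS a Ha).
have [x1 Hx1 Hx1m] := gen_residue1 HS m_gt0 Hinc HAS HAdown Ha Hma.
split; last by exists A; split; [exact: (msg_sub Hmsg (take_uniq _ Hu) HAs) |].
split; first exact: gen_numerical m_gt0 HmA Hx1 Hx1m.
exists m; split; first exact: multiplicity_sub Hmult HgenS HmA.
exact: gen_apery_increasing HS m_gt0 Hinc HAS HAdown.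
Qed.
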